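(* Let $a=\frac{1+\sqrt{5}}{2}$ and $b=a^2=a+1$, and write $a_n=[an]$ and $b_n=[bn]$. Then the series $$\sum_{n=1}^\infty \left(\frac{a_{n+1}}{a_n}-\frac{b_{n+1}}{b_n}\right)$$ converges.
   Context: $[x]$ denotes the greatest integer not exceeding $x$. *)

From Stdlib Require Import Reals.
From Coquelicot Require Import Coquelicot.
Open Scope R_scope.

(* [x] = greatest integer not exceeding x (Stdlib's Int_part is exactly the floor). *)
Definition floorR (x : R) : R := IZR (Int_part x).

Definition phi : R := (1 + sqrt 5) / 2.
Definition aa : R := phi.
Definition bb : R := phi ^ 2.

Definition a_seq (n : nat) : R := floorR (aa * INR n).
Definition b_seq (n : nat) : R := floorR (bb * INR n).

(* term of the series, indexed from n = 1: u k = f (k+1) *)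
Definition term (n : nat) : R :=
  a_seq (n + 1) / a_seq n - b_seq (n + 1) / b_seq n.

(* For any c > 1, write [c n] = c n - r_n with 0 <= r_n < 1. Then
   [c (n+1)] / [c n] = 1 + 1/n + (r_n - r_(n+1)) / (c n) + O(1/n^2),
   and the middle term has summable series by Abel summation, because r_n is
   bounded and 1/n decreases to 0. Hence sum_n ([c (n+1)]/[c n] - 1 - 1/n)
   converges for every c > 1, and the theorem is the difference of the cases
   c = a and c = b. *)

From Stdlib Require Import Reals Lra Lia.
From Coquelicot Require Import Coquelicot.
Open Scope R_scope.

Lemma sum_n_telescope (f : nat -> R) (n : nat) :
  sum_n (fun k => f k - f (S k)) n = f 0%nat - f (S n).
Proof.
  induction n as [|n IH].
  - now rewrite sum_O.
  - rewrite sum_Sn, IH. unfold plus; simpl. ring.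
Qed.

Lemma is_series_telescope (f : nat -> R) (l : R) :
  is_lim_seq f l -> is_series (fun k => f k - f (S k)) (f 0%nat - l).
Proof.
  intros Hf.
  change (is_lim_seq (sum_n (fun k => f k - f (S k))) (f 0%nat - l)).
  apply (is_lim_seq_ext (fun n => f 0%nat - f (S n))).
  - intros n. now rewrite sum_n_telescope.
  - apply is_lim_seq_minus'; [apply is_lim_seq_const|].
    now apply (is_lim_seq_incr_1 f).
Qed.

Lemma is_lim_seq_inv_INR_S : is_lim_seq (fun k => / INR (S k)) 0.
Proof.
  apply (is_lim_seq_inv (fun k => INR (S k)) p_infty); [|discriminate].
  apply (is_lim_seq_incr_1 INR). exact is_lim_seq_INR.
Qed.

Lemma inv_INR_S_sub (k : nat) :
  / INR (S k) - / INR (S (S k)) = / (INR (S k) * INR (S (S k))).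
Proof.
  pose proof (lt_0_INR (S k) (Nat.lt_0_succ k)).
  rewrite (S_INR (S k)). field. lra.
Qed.

Lemma ex_series_inv_consecutive :
  ex_series (fun k => / (INR (S k) * INR (S (S k)))).
Proof.
  eexists.
  exact (is_series_ext _ _ _ inv_INR_S_sub (is_series_telescope _ _ is_lim_seq_inv_INR_S)).
Qed.

Lemma ex_series_bounded_diff_div (h : nat -> R) (M : R) :
  (forall n, Rabs (h n) <= M) ->
  ex_series (fun k => (h k - h (S k)) / INR (S k)).
Proof.
  intros Hh.
  apply (ex_series_ext (fun k => scal (/ INR (S k)) (h k - h (S k)))).
  { intros k. change (/ INR (S k) * (h k - h (S k)) = (h k - h (S k)) / INR (S k)).
    apply Rmult_comm. }
  apply partial_summation_R.
  - exists (M + M). intros n. rewrite sum_n_telescope.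
    change (norm ?x) with (Rabs x).
    eapply Rle_trans; [apply Rabs_triang|]. rewrite Rabs_Ropp.
    apply Rplus_le_compat; apply Hh.
  - exact is_lim_seq_inv_INR_S.
  - apply (ex_series_ext (fun k => / (INR (S k) * INR (S (S k))))); [|exact ex_series_inv_consecutive].
    intros k. change (norm (minus ?a ?b)) with (Rabs (a - b)).
    rewrite Rabs_minus_sym, inv_INR_S_sub, Rabs_pos_eq; [reflexivity|].
    left. apply Rinv_0_lt_compat, Rmult_lt_0_compat; apply lt_0_INR; lia.
Qed.

Definition fracR (x : R) : R := x - floorR x.

Lemma fracR_bounds (x : R) : 0 <= fracR x < 1.
Proof. unfold fracR, floorR. destruct (base_Int_part x). lra. Qed.

Lemma floor_ratio_remainder_bound (c N r1 r2 : R) :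
  1 < c -> 1 <= N -> 0 <= r1 < 1 -> 0 <= r2 < 1 ->
  Rabs ((c * (N + 1) - r2) / (c * N - r1) - 1 - 1 / N - (r1 - r2) / (c * N))
    <= 2 * (c + 1) / ((c - 1) * c) / (N * (N + 1)).
Proof.
  intros Hc HN Hr1 Hr2.
  assert (Hden : (c - 1) * N <= c * N - r1) by nra.
  assert (Hden0 : 0 < (c - 1) * N) by nra.
  replace ((c * (N + 1) - r2) / (c * N - r1) - 1 - 1 / N - (r1 - r2) / (c * N))
    with ((c + r1 - r2) * r1 / ((c * N - r1) * c * N)) by (field; lra).
  assert (Hnum : 0 <= (c + r1 - r2) * r1 <= c + 1) by nra.
  assert (Hden' : (c - 1) * N * c * N <= (c * N - r1) * c * N).
  { apply Rmult_le_compat_r; [lra|]. apply Rmult_le_compat_r; lra. }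
  assert (Hden'0 : 0 < (c - 1) * N * c * N) by (apply Rmult_lt_0_compat; nra).
  rewrite Rabs_pos_eq by (apply Rdiv_le_0_compat; lra).
  apply Rle_trans with ((c + 1) / ((c - 1) * N * c * N)).
  - apply Rmult_le_compat; try lra.
    + left; apply Rinv_0_lt_compat; lra.
    + apply Rinv_le_contravar; lra.
  - (* N + 1 <= 2 N *)
    replace ((c + 1) / ((c - 1) * N * c * N))
      with (2 * (c + 1) / ((c - 1) * c) / (N * (N + N))) by (field; lra).
    apply Rmult_le_compat_l.
    + apply Rdiv_le_0_compat; nra.
    + apply Rinv_le_contravar; nra.
Qed.

Definition floor_ratio_defect (c : R) (n : nat) : R :=
  floorR (c * INR (S n)) / floorR (c * INR n) - 1 - 1 / INR n.

Lemma ex_series_floor_ratio_defect (c : R) :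
  1 < c -> ex_series (fun k => floor_ratio_defect c (S k)).
Proof.
  intros Hc.
  set (r := fun n => fracR (c * INR n)).
  set (K := 2 * (c + 1) / ((c - 1) * c)).
  set (E := fun k => floor_ratio_defect c (S k) - (r (S k) - r (S (S k))) / (c * INR (S k))).
  assert (HE : ex_series E).
  { apply (ex_series_le E (fun k => K * / (INR (S k) * INR (S (S k))))).
    2: exact (ex_series_scal_l K _ ex_series_inv_consecutive).
    intros k. change (norm ?x) with (Rabs x).
    assert (HN : 1 <= INR (S k)) by (rewrite S_INR; pose proof (pos_INR k); lra).
    unfold E, floor_ratio_defect, r. rewrite (S_INR (S k)).
    set (N := INR (S k)).
    set (r1 := fracR (c * N)). set (r2 := fracR (c * (N + 1))).
    replace (floorR (c * N)) with (c * N - r1) by (unfold r1, fracR; ring).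
    replace (floorR (c * (N + 1))) with (c * (N + 1) - r2) by (unfold r2, fracR; ring).
    apply floor_ratio_remainder_bound; [assumption | assumption | apply fracR_bounds ..]. }
  assert (Hr : ex_series (fun k => (r (S k) - r (S (S k))) / INR (S k) * / c)).
  { apply ex_series_scal_r, (ex_series_bounded_diff_div (fun n => r (S n)) 1).
    intros n. destruct (fracR_bounds (c * INR (S n))).
    rewrite Rabs_pos_eq; unfold r; lra. }
  apply (ex_series_ext (fun k => plus (E k) ((r (S k) - r (S (S k))) / INR (S k) * / c))).
  - intros k.
    change (E k + (r (S k) - r (S (S k))) / INR (S k) * / c = floor_ratio_defect c (S k)).
    unfold E. field. split; [lra | apply not_0_INR; discriminate].
  - exact (ex_series_plus _ _ HE Hr).
Qed.

Lemma phi_gt_1 : 1 < phi.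
Proof.
  unfold phi. assert (1 < sqrt 5) by (rewrite <- sqrt_1; apply sqrt_lt_1; lra).
  lra.
Qed.

Theorem theorem1 : ex_series (fun k : nat => term (S k)).
Proof.
  assert (Ha : 1 < aa) by exact phi_gt_1.
  assert (Hb : 1 < bb) by (unfold bb; pose proof phi_gt_1; simpl; nra).
  apply (ex_series_ext (fun k => plus (floor_ratio_defect aa (S k))
                                      (opp (floor_ratio_defect bb (S k))))).
  - intros k.
    change (floor_ratio_defect aa (S k) - floor_ratio_defect bb (S k) = term (S k)).
    unfold term, a_seq, b_seq, floor_ratio_defect. rewrite Nat.add_1_r. ring.
  - exact (ex_series_minus _ _ (ex_series_floor_ratio_defect aa Ha)
                               (ex_series_floor_ratio_defect bb Hb)).
Qed.
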